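(* Let $\Gamma$ be a game over an interval $I=[b,e]\subseteq[0,1]$ (in the setting described in the context), and let $l$ be a location with $l\notin L^{\mathrm{Goal}}$, $\mathrm{urg}(l)=0$, and at least one outgoing edge; assume that for every $l'$ with $(l,l')\in E$, the function $x\mapsto\mathrm{OptCost}(l',x)$ is a real-valued cost function on $I$. (i) If $l\in L^{\mathrm{Min}}$ and $h(x)=\min\{\mathrm{OptCost}(l',x):(l,l')\in E\}$, then for all $x\in I$, $\mathrm{OptCost}(l,x)=\mathrm{minC}(h,\pi(l))(x)$. (ii) If $l\in L^{\mathrm{Max}}$ and $h(x)=\max\{\mathrm{OptCost}(l',x):(l,l')\in E\}$, then for all $x\in I$, $\mathrm{OptCost}(l,x)=\mathrm{maxC}(h,\pi(l))(x)$.
   Context: Setting: a game $\Gamma$ over an interval $I=[b,e]\subseteq[0,1]$ consists of a finite set of locations $L=L^{\mathrm{Min}}\cup L^{\mathrm{Max}}$ (disjoint), goal locations $L^{\mathrm{Goal}}\subseteq L$ each assigned a cost function on $I$ (a continuous, non-increasing, piecewise affine function with finitely many pieces), an edge set $E\subseteq L\times L$ (all guards true, no resets, discrete transitions have price $0$), an urgency map $\mathrm{urg}:L\to\{0,1\}$ and price rates $\pi:L\to\mathbb{N}$. States are $L\times I$; discrete transitions $(l,x)\to(l',x)$ for $(l,l')\in E$ with price $0$; continuous transitions $(l,x)\xrightarrow{t}(l,x+t)$ for $t>0$, $\mathrm{urg}(l)=0$, $x+t\le e$, with price $\pi(l)t$. Runs are finite or infinite sequences of consecutive transitions, not containing infinitely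 many consecutive continuous transitions. Strategies of the minimizer (maximizer) map finite runs ending in states with location in $L^{\mathrm{Min}}$ ($L^{\mathrm{Max}}$) to an available transition; $\mathrm{Run}(s,\mu,\chi)$ is the unique resulting run. The cost of a run that first visits a goal location $l$ at state $(l,x)$ after $n$ transitions is (goal cost function of $l$)$(x)$ plus the sum of the prices of the first $n$ transitions, and $\infty$ if no goal location is visited. $\mathrm{OptCost}(s)=\inf_\mu\sup_\chi\mathrm{Cost}(\mathrm{Run}(s,\mu,\chi))$, assumed finite from every state. For $f:[b,e]\to\mathbb{R}$ and constant $c\ge0$: $\mathrm{minC}(f,c)(x)=\min_{0\le t\le e-x}(ct+f(x+t))$ and $\mathrm{maxC}(f,c)(x)=\max_{0\le t\le e-x}(ct+f(x+t))$. *)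

From Stdlib Require Import Reals Lra List ClassicalEpsilon.
Import ListNotations.
Open Scope R_scope.

Definition IsMin (P : R -> Prop) (m : R) : Prop := P m /\ forall y, P y -> m <= y.
Definition IsMax (P : R -> Prop) (m : R) : Prop := P m /\ forall y, P y -> y <= m.
(* min / max of a set of reals (well-defined whenever the min / max exists) *)
Definition MinOf (P : R -> Prop) : R := epsilon (inhabits 0) (IsMin P).
Definition MaxOf (P : R -> Prop) : R := epsilon (inhabits 0) (IsMax P).

(* minC(f,c)(x) = min_{0<=t<=e-x} (c t + f(x+t)),  maxC likewise; e = right end of I *)
Definition minC (e : R) (f : R -> R) (c : R) (x : R) : R :=
  MinOf (fun y => exists t, 0 <= t <= e - x /\ y = c * t + f (x + t)).
Definition maxC (e : R) (f : R -> R) (c : R) (x : R) : R :=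
  MaxOf (fun y => exists t, 0 <= t <= e - x /\ y = c * t + f (x + t)).

Definition cost_function (b e : R) (f : R -> R) : Prop :=
  (forall x y, b <= x -> x <= y -> y <= e -> f y <= f x) /\
  (forall x, b <= x <= e -> forall eps, 0 < eps -> exists delta, 0 < delta /\
      forall y, b <= y <= e -> Rabs (y - x) < delta -> Rabs (f y - f x) < eps) /\
  (exists (n : nat) (p : nat -> R),
      p 0%nat = b /\ p n = e /\
      (forall i, (i < n)%nat -> p i < p (S i)) /\
      (forall i, (i < n)%nat -> exists a c, forall x, p i <= x <= p (S i) -> f x = a * x + c)).

Record Game (Loc : Type) := {
  locs : list Loc;                       (* L is finite *)
  locs_complete : forall l, In l locs;
  isMin : Loc -> bool;                   (* true: l in L^Min, false: l in L^Max *)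
  goal : Loc -> option (R -> R);         (* Some f: l in L^Goal with cost function f *)
  edge : Loc -> Loc -> bool;
  urgent : Loc -> bool;                  (* urg(l) = 1 iff urgent l = true *)
  rate : Loc -> nat;
  lo : R;
  hi : R;
  lo_nonneg : 0 <= lo;
  lo_le_hi : lo <= hi;
  hi_le_1 : hi <= 1;
  goal_cost : forall l f, goal l = Some f -> cost_function lo hi f
}.
Arguments locs {Loc}. Arguments isMin {Loc}. Arguments goal {Loc}.
Arguments edge {Loc}. Arguments urgent {Loc}. Arguments rate {Loc}.
Arguments lo {Loc}. Arguments hi {Loc}.

Section Sem.
Context {Loc : Type} (G : Game Loc).

Definition State := (Loc * R)%type.
Definition inI (s : State) : Prop := lo G <= snd s <= hi G.

Inductive Act := Disc (l' : Loc) | Delay (t : R).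

Definition avail (s : State) (a : Act) : Prop :=
  match a with
  | Disc l' => edge G (fst s) l' = true
  | Delay t => 0 < t /\ urgent G (fst s) = false /\ snd s + t <= hi G
  end.

Definition next (s : State) (a : Act) : State :=
  match a with
  | Disc l' => (l', snd s)
  | Delay t => (fst s, snd s + t)
  end.

Definition aprice (s : State) (a : Act) : R :=
  match a with
  | Disc _ => 0
  | Delay t => INR (rate G (fst s)) * t
  end.

(* a finite run: start state + (chronological) list of transitions *)
Fixpoint cur (s : State) (h : list Act) : State :=
  match h with [] => s | a :: h' => cur (next s a) h' end.

Fixpoint valid_run (s : State) (h : list Act) : Prop :=
  match h with [] => True | a :: h' => avail s a /\ valid_run (next s a) h' end.

Fixpoint pathprice (s : State) (h : list Act) : R :=
  match h with [] => 0 | a :: h' => aprice s a + pathprice (next s a) h' end.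

(* a strategy maps a finite run (start state, transitions) to a transition;
   None is only allowed when no transition is available *)
Definition Strategy := State -> list Act -> option Act.

(* the player's own play from a finite run (used for the non-Zeno condition) *)
Fixpoint selfplay (sg : Strategy) (s0 : State) (h : list Act) (n : nat) : list Act :=
  match n with
  | O => h
  | S n' => let h' := selfplay sg s0 h n' in
            match sg s0 h' with Some a => h' ++ [a] | None => h' end
  end.

Definition is_delay (o : option Act) : Prop :=
  match o with Some (Delay _) => True | _ => False end.

(* valid strategy for player p (p = true: Min, p = false: Max) *)
Definition valid_strategy (p : bool) (sg : Strategy) : Prop :=
  forall s0 h, inI s0 -> valid_run s0 h -> isMin G (fst (cur s0 h)) = p ->
    (match sg s0 h with
     | Some a => avail (cur s0 h) a
     | None => forall a, ~ avail (cur s0 h) a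
     end) /\
    (* outcomes never contain infinitely many consecutive continuous transitions *)
    (exists n, ~ is_delay (sg s0 (selfplay sg s0 h n))).

(* Run(s, mu, chi): its prefix after n steps (stays put once the run is finite) *)
Fixpoint outcome (mu chi : Strategy) (s0 : State) (n : nat) : list Act :=
  match n with
  | O => []
  | S n' => let h := outcome mu chi s0 n' in
            let sg := if isMin G (fst (cur s0 h)) then mu else chi in
            match sg s0 h with Some a => h ++ [a] | None => h end
  end.

Definition FirstGoal (mu chi : Strategy) (s0 : State) (n : nat) : Prop :=
  length (outcome mu chi s0 n) = n /\
  goal G (fst (cur s0 (outcome mu chi s0 n))) <> None /\
  forall m, (m < n)%nat -> goal G (fst (cur s0 (outcome mu chi s0 m))) = None.

Inductive ER := Fin (r : R) | PInf.
Definition ER_le (a b : ER) : Prop :=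
  match a, b with
  | _, PInf => True
  | PInf, Fin _ => False
  | Fin x, Fin y => x <= y
  end.
Definition ER_is_sup (S : ER -> Prop) (u : ER) : Prop :=
  (forall a, S a -> ER_le a u) /\ (forall u', (forall a, S a -> ER_le a u') -> ER_le u u').
Definition ER_is_inf (S : ER -> Prop) (u : ER) : Prop :=
  (forall a, S a -> ER_le u a) /\ (forall u', (forall a, S a -> ER_le u' a) -> ER_le u' u).

Definition Cost (mu chi : Strategy) (s0 : State) : ER :=
  match excluded_middle_informative (exists n, FirstGoal mu chi s0 n) with
  | left H =>
      let n := proj1_sig (constructive_indefinite_description _ H) in
      let h := outcome mu chi s0 n in
      let s := cur s0 h in
      match goal G (fst s) with
      | Some f => Fin (f (snd s) + pathprice s0 h)
      | None => PInf
      end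
  | right _ => PInf
  end.

(* OptCost(s) = inf_mu sup_chi Cost(Run(s,mu,chi)) equals the real v *)
Definition IsOptCost (s : State) (v : R) : Prop :=
  exists U : Strategy -> ER,
    (forall mu, valid_strategy true mu ->
       ER_is_sup (fun c => exists chi, valid_strategy false chi /\ c = Cost mu chi s) (U mu)) /\
    ER_is_inf (fun c => exists mu, valid_strategy true mu /\ c = U mu) (Fin v).

End Sem.

(* Every play from [(l, x)] starts with a move: some delays of total length
   [t] followed by an edge to [l'], at price [rate l * t]; from then on the
   game is the game from [(l', x + t)].  The owner of [l] picks the move, so
   the value is the min (Min location) or max (Max location) over moves of
   [rate l * t + OptCost l' (x + t)]. *)

From Stdlib Require Import Reals Lra Lia List ClassicalEpsilon Classical.
Import ListNotations.
Open Scope R_scope.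

Section Runs.
Context {Loc : Type} (G : Game Loc).

Lemma cur_app (s : @State Loc) a b : cur s (a ++ b) = cur (cur s a) b.
Proof. revert s; induction a; simpl; auto. Qed.

Lemma valid_run_app (s : @State Loc) a b :
  valid_run G s (a ++ b) <-> valid_run G s a /\ valid_run G (cur s a) b.
Proof. revert s; induction a as [|x a IH]; intro s; simpl; [tauto|]. rewrite IH. tauto. Qed.

Lemma pathprice_app (s : @State Loc) a b :
  pathprice G s (a ++ b) = pathprice G s a + pathprice G (cur s a) b.
Proof. revert s; induction a as [|x a IH]; intro s; simpl; [ring|]. rewrite IH. ring. Qed.

Lemma valid_run_inI (s : @State Loc) h : inI G s -> valid_run G s h -> inI G (cur s h).
Proof.
  revert s; induction h as [|a h IH]; intros s Hs Hv; simpl in *; auto.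
  destruct Hv as [Ha Hv]. apply IH; auto.
  destruct a; unfold inI in *; simpl in *; lra.
Qed.

End Runs.

Section FirstMove.
Context {Loc : Type}.

Definition delays_only (h : list (@Act Loc)) : Prop := Forall (fun a => is_delay (Some a)) h.

Fixpoint first_move (h : list (@Act Loc)) : option (list Act * list Act) :=
  match h with
  | [] => None
  | Disc l' :: r => Some ([Disc l'], r)
  | Delay t :: r =>
      match first_move r with Some (p, q) => Some (Delay t :: p, q) | None => None end
  end.

(* [p] is itself a single move: delays followed by one discrete transition. *)
Definition is_move (p : list (@Act Loc)) : Prop := first_move p = Some (p, []).

Lemma first_move_app h p r k :
  first_move h = Some (p, r) -> first_move (h ++ k) = Some (p, r ++ k).
Proof.
  revert p r; induction h as [|[l'|t] h IH]; intros p r E; simpl in *; try discriminate.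
  - inversion E; subst; auto.
  - destruct (first_move h) as [[p' q']|]; [|discriminate].
    rewrite (IH _ _ eq_refl). inversion E; subst; auto.
Qed.

Lemma first_move_split h p r : first_move h = Some (p, r) -> h = p ++ r /\ is_move p.
Proof.
  unfold is_move.
  revert p r; induction h as [|[l'|t] h IH]; intros p r E; simpl in *; try discriminate.
  - inversion E; subst; auto.
  - destruct (first_move h) as [[p' q']|]; [|discriminate].
    destruct (IH _ _ eq_refl) as [-> Hp]. inversion E; subst. simpl. rewrite Hp. auto.
Qed.

Lemma first_move_None h : first_move h = None <-> delays_only h.
Proof.
  induction h as [|[l'|t] h IH]; simpl; split; intro H; try discriminate; try constructor.
  - inversion H as [|? ? Hd _]. contradiction.
  - destruct (first_move h) as [[p' q']|]; [discriminate|]. exact I.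
  - destruct (first_move h) as [[p' q']|]; [discriminate|]. apply IH; reflexivity.
  - inversion H as [|? ? _ Hh]. apply IH in Hh. rewrite Hh. reflexivity.
Qed.

Lemma is_move_iff p : is_move p <-> exists q l', p = q ++ [Disc l'] /\ delays_only q.
Proof.
  unfold is_move. split.
  - induction p as [|[l'|t] p IH]; intros E; simpl in *; try discriminate.
    + inversion E. exists [], l'. split; auto. constructor.
    + destruct (first_move p) as [[p' q']|]; [|discriminate].
      inversion E. subst p' q'. destruct (IH eq_refl) as [q [l' [-> Hq]]].
      exists (Delay t :: q), l'. split; auto. constructor; simpl; auto.
  - intros [q [l' [-> Hq]]]. induction Hq as [|[l''|t] h Ha Hh IH]; simpl in *; auto.
    + contradiction.
    + rewrite IH; auto.
Qed.

Lemma delays_only_loc (s : @State Loc) h : delays_only h -> fst (cur s h) = fst s.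
Proof.
  intro H; revert s; induction H as [|[l'|t] h Ha Hh IH]; intro s; simpl in *; auto.
  - contradiction.
  - rewrite IH; auto.
Qed.

Lemma is_move_prefix p m : is_move p -> (m < length p)%nat -> delays_only (firstn m p).
Proof.
  intros E Hm. destruct (proj1 (is_move_iff p) E) as [q [l' [-> Hq]]].
  rewrite length_app in Hm; simpl in Hm.
  rewrite firstn_app. replace (m - length q)%nat with 0%nat by lia. simpl. rewrite app_nil_r.
  rewrite <- (firstn_skipn m q) in Hq. apply Forall_app in Hq. tauto.
Qed.

End FirstMove.

Section Moves.
Context {Loc : Type} (G : Game Loc).

Lemma delays_only_run (s : @State Loc) h : delays_only h -> valid_run G s h ->
  exists T, 0 <= T /\ cur s h = (fst s, snd s + T) /\ pathprice G s h = INR (rate G (fst s)) * T.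
Proof.
  intro H; revert s; induction H as [|[l'|t] h Ha Hh IH]; intros s Hv; simpl in *.
  - exists 0. destruct s; simpl; split; [lra|split]; [f_equal; ring|ring].
  - contradiction.
  - destruct Hv as [[Ht _] Hv]. destruct (IH _ Hv) as [T [HT [Hc Hp]]]. simpl in *.
    exists (t + T). split; [lra|split]; [rewrite Hc; f_equal; ring|rewrite Hp; ring].
Qed.

Lemma is_move_run (s : @State Loc) p : is_move p -> valid_run G s p ->
  exists l' t, 0 <= t /\ edge G (fst s) l' = true /\ cur s p = (l', snd s + t) /\
     pathprice G s p = INR (rate G (fst s)) * t.
Proof.
  intros E Hv. destruct (proj1 (is_move_iff p) E) as [q [l' [-> Hq]]].
  apply valid_run_app in Hv. destruct Hv as [Hv1 Hv2].
  destruct (delays_only_run s q Hq Hv1) as [T [HT [Hc Hp]]].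
  exists l', T. split; auto. simpl in Hv2. rewrite Hc in Hv2. simpl in Hv2.
  split; [tauto|]. rewrite cur_app, pathprice_app, Hc. simpl. split; auto. rewrite Hp; ring.
Qed.

End Moves.

Section StrategyValidity.
Context {Loc : Type} (G : Game Loc).

Lemma selfplay_extends (sg : @Strategy Loc) s0 h n : exists k, selfplay sg s0 h n = h ++ k.
Proof.
  induction n as [|n [k IH]]; simpl; [exists []; rewrite app_nil_r; auto|].
  rewrite IH. destruct (sg s0 (h ++ k)) as [a|].
  - exists (k ++ [a]). rewrite app_assoc; auto.
  - exists k; auto.
Qed.

Lemma selfplay_agree (sg sg' : @Strategy Loc) s0 h :
  (forall k, sg s0 (h ++ k) = sg' s0 (h ++ k)) ->
  forall n, selfplay sg s0 h n = selfplay sg' s0 h n.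
Proof.
  intros H n; induction n as [|n IH]; simpl; auto.
  rewrite <- IH. destruct (selfplay_extends sg s0 h n) as [k Hk]. rewrite Hk, H. auto.
Qed.

Lemma selfplay_shift (sg sg' : @Strategy Loc) s0 s1 p :
  (forall r, sg s0 (p ++ r) = sg' s1 r) ->
  forall r n, selfplay sg s0 (p ++ r) n = p ++ selfplay sg' s1 r n.
Proof.
  intros H r n; induction n as [|n IH]; simpl; auto.
  rewrite IH, H. destruct (sg' s1 _); auto. rewrite app_assoc; auto.
Qed.

Definition obeys (sg : Strategy) (s0 : State) (h : list Act) : Prop :=
  (match sg s0 h with
   | Some a => avail G (cur s0 h) a
   | None => forall a, ~ avail G (cur s0 h) a
   end) /\
  (exists n, ~ is_delay (sg s0 (selfplay sg s0 h n))).

Definition valid_from (p : bool) (sg : Strategy) (s0 : State) : Prop :=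
  forall h, valid_run G s0 h -> isMin G (fst (cur s0 h)) = p -> obeys sg s0 h.

Lemma valid_strategy_from p sg :
  valid_strategy G p sg <-> forall s0, inI G s0 -> valid_from p sg s0.
Proof. unfold valid_strategy, valid_from, obeys. split; intros H; intros; apply H; auto. Qed.

Lemma obeys_agree (sg sg' : Strategy) s0 h :
  (forall k, sg s0 (h ++ k) = sg' s0 (h ++ k)) -> obeys sg s0 h -> obeys sg' s0 h.
Proof.
  intros H [H1 [n H2]]. split.
  - specialize (H []). rewrite app_nil_r in H. rewrite <- H. auto.
  - exists n. rewrite <- (selfplay_agree sg sg' s0 h H n).
    destruct (selfplay_extends sg s0 h n) as [k Hk]. rewrite Hk, <- H, <- Hk. auto.
Qed.

Lemma obeys_shift (sg sg' : Strategy) s0 p r :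
  (forall r, sg s0 (p ++ r) = sg' (cur s0 p) r) ->
  (obeys sg s0 (p ++ r) <-> obeys sg' (cur s0 p) r).
Proof.
  intros H. unfold obeys. rewrite H, cur_app.
  split; intros [H1 [n H2]]; split; auto; exists n.
  - rewrite (selfplay_shift sg sg' s0 (cur s0 p) p H), H in H2. auto.
  - rewrite (selfplay_shift sg sg' s0 (cur s0 p) p H), H. auto.
Qed.

Lemma valid_from_ext p (sg sg' : Strategy) s0 :
  (forall h, sg s0 h = sg' s0 h) -> valid_from p sg s0 -> valid_from p sg' s0.
Proof. intros H V h Hv Hm. apply (obeys_agree sg); auto. Qed.

Lemma valid_from_shift P (sg sg' : Strategy) s0 p :
  valid_from P sg s0 -> valid_run G s0 p -> (forall r, sg s0 (p ++ r) = sg' (cur s0 p) r) ->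
  valid_from P sg' (cur s0 p).
Proof.
  intros V Hp H r Hr Hm. apply (obeys_shift sg sg' s0 p r H). apply V.
  - apply valid_run_app; auto.
  - rewrite cur_app; auto.
Qed.

Definition continuation (sg : @Strategy Loc) (s0 : State) (p : list Act) : Strategy :=
  fun s h => if excluded_middle_informative (s = cur s0 p) then sg s0 (p ++ h) else sg s h.

Lemma continuation_eq (sg : Strategy) s0 p r : continuation sg s0 p (cur s0 p) r = sg s0 (p ++ r).
Proof. unfold continuation. destruct excluded_middle_informative; congruence. Qed.

Lemma continuation_valid P (sg : Strategy) s0 p :
  valid_strategy G P sg -> inI G s0 -> valid_run G s0 p ->
  valid_strategy G P (continuation sg s0 p).
Proof.
  rewrite !valid_strategy_from. intros V Hs Hp s Hs'.
  destruct (classic (s = cur s0 p)) as [->|Hne].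
  - apply valid_from_shift with (sg := sg) (p := p); auto.
    intros r; rewrite continuation_eq; auto.
  - apply valid_from_ext with (sg := sg); auto. intros h. unfold continuation.
    destruct excluded_middle_informative; congruence.
Qed.

Definition glue (F : list (@Act Loc) -> option Act) (T : list Act -> Strategy)
  (d : Strategy) (s0 : State) : Strategy :=
  fun s h => if excluded_middle_informative (s = s0) then
     match first_move h with Some (q, r) => T q (cur s0 q) r | None => F h end
   else d s h.

Lemma glue_after F T d s0 p r : is_move p -> glue F T d s0 s0 (p ++ r) = T p (cur s0 p) r.
Proof.
  intros E. unfold glue. destruct excluded_middle_informative; [|congruence].
  rewrite (first_move_app p p [] r E). auto.
Qed.

Lemma glue_before F T d s0 h : delays_only h -> glue F T d s0 s0 h = F h.
Proof.
  intros E. apply first_move_None in E.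
  unfold glue. destruct excluded_middle_informative; [|congruence]. rewrite E; auto.
Qed.

Lemma glue_valid P F T d s0 :
  valid_strategy G P d ->
  (forall q, is_move q -> valid_run G s0 q -> valid_from P (T q) (cur s0 q)) ->
  (isMin G (fst s0) = P -> forall h, delays_only h -> valid_run G s0 h ->
     exists a, F h = Some a /\ avail G (cur s0 h) a /\
       (~ is_delay (Some a) \/ exists b, F (h ++ [a]) = Some b /\ ~ is_delay (Some b))) ->
  valid_strategy G P (glue F T d s0).
Proof.
  intros Vd HT HF. apply valid_strategy_from. intros s Hs.
  destruct (classic (s = s0)) as [->|Hne].
  - intros h Hv Hm. destruct (first_move h) as [[q r]|] eqn:E.
    + destruct (first_move_split _ _ _ E) as [-> Eq].
      apply valid_run_app in Hv. destruct Hv as [Hv1 Hv2].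
      apply (obeys_shift _ (T q) s0 q r). { intros r'; apply glue_after; auto. }
      apply HT; auto. rewrite <- cur_app; auto.
    + apply first_move_None in E. rewrite delays_only_loc in Hm; auto.
      destruct (HF Hm h E Hv) as [a [Fa [Ava Hb]]].
      assert (Gh : glue F T d s0 s0 h = Some a) by (rewrite glue_before; auto).
      split; [rewrite Gh; auto|].
      destruct a as [l'|t]; [exists 0%nat; simpl; rewrite Gh; simpl; auto|].
      destruct Hb as [Hb|[b [Fb Hb]]]; [simpl in Hb; tauto|].
      exists 1%nat. simpl. rewrite Gh, glue_before, Fb; auto.
      apply Forall_app; split; [exact E|repeat constructor].
  - rewrite valid_strategy_from in Vd. apply valid_from_ext with (sg := d); auto.
    intros h. unfold glue. destruct excluded_middle_informative; congruence.
Qed.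

End StrategyValidity.

Section Outcomes.
Context {Loc : Type} (G : Game Loc).

Lemma outcome_extends mu chi (s0 : @State Loc) m k :
  exists q, outcome G mu chi s0 (m + k) = outcome G mu chi s0 m ++ q /\ (length q <= k)%nat.
Proof.
  induction k as [|k [q [IH Hq]]].
  - exists []. rewrite Nat.add_0_r, app_nil_r; auto.
  - rewrite Nat.add_succ_r. simpl. rewrite IH.
    match goal with |- context [match ?X with _ => _ end] => destruct X as [a|] end.
    + exists (q ++ [a]). rewrite app_assoc. split; auto. rewrite length_app; simpl; lia.
    + exists q; split; auto.
Qed.

Lemma outcome_prefix mu chi (s0 : @State Loc) N m :
  length (outcome G mu chi s0 N) = N -> (m <= N)%nat ->
  outcome G mu chi s0 m = firstn m (outcome G mu chi s0 N).
Proof.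
  intros HN Hm. destruct (outcome_extends mu chi s0 m (N - m)) as [q [H Hq]].
  replace (m + (N - m))%nat with N in H by lia. rewrite H in *.
  assert (Hlen : (length (outcome G mu chi s0 m) <= m)%nat).
  { destruct (outcome_extends mu chi s0 0 m) as [q0 [H0 Hq0]]. simpl in H0. rewrite H0; lia. }
  rewrite length_app in HN. rewrite firstn_app.
  replace (m - length (outcome G mu chi s0 m))%nat with 0%nat by lia.
  simpl. rewrite app_nil_r, firstn_all2; auto; lia.
Qed.

Lemma outcome_shift mu chi mu' chi' (s0 : @State Loc) p m :
  (forall r, mu s0 (p ++ r) = mu' (cur s0 p) r) ->
  (forall r, chi s0 (p ++ r) = chi' (cur s0 p) r) ->
  outcome G mu chi s0 m = p ->
  forall n, outcome G mu chi s0 (m + n) = p ++ outcome G mu' chi' (cur s0 p) n.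
Proof.
  intros Hm Hc Ho n. induction n as [|n IH].
  - rewrite Nat.add_0_r, app_nil_r; auto.
  - rewrite Nat.add_succ_r. simpl. rewrite IH, cur_app.
    destruct (isMin G (fst (cur (cur s0 p) (outcome G mu' chi' (cur s0 p) n)))).
    + rewrite Hm. destruct (mu' _ _); auto. rewrite app_assoc; auto.
    + rewrite Hc. destruct (chi' _ _); auto. rewrite app_assoc; auto.
Qed.

Definition cost_at mu chi (s0 : @State Loc) n : ER :=
  let h := outcome G mu chi s0 n in
  match goal G (fst (cur s0 h)) with
  | Some f => Fin (f (snd (cur s0 h)) + pathprice G s0 h)
  | None => PInf
  end.

Lemma FirstGoal_unique mu chi (s0 : @State Loc) n m :
  FirstGoal G mu chi s0 n -> FirstGoal G mu chi s0 m -> n = m.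
Proof.
  intros [_ [Hn Hn']] [_ [Hm Hm']].
  destruct (Nat.lt_total n m) as [H|[H|H]]; auto.
  - exfalso; apply Hn; apply Hm'; auto.
  - exfalso; apply Hm; apply Hn'; auto.
Qed.

Lemma Cost_FirstGoal mu chi (s0 : @State Loc) n :
  FirstGoal G mu chi s0 n -> Cost G mu chi s0 = cost_at mu chi s0 n.
Proof.
  intros H. unfold Cost. destruct excluded_middle_informative as [e|e].
  - destruct (constructive_indefinite_description _ e) as [m Hm]. simpl.
    rewrite (FirstGoal_unique mu chi s0 m n Hm H). reflexivity.
  - exfalso; apply e; exists n; auto.
Qed.

Lemma Cost_no_goal mu chi (s0 : @State Loc) :
  ~ (exists n, FirstGoal G mu chi s0 n) -> Cost G mu chi s0 = PInf.
Proof. intros H. unfold Cost. destruct excluded_middle_informative; [contradiction|auto]. Qed.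

Definition ER_shift (c : R) (a : ER) : ER := match a with Fin r => Fin (c + r) | PInf => PInf end.

Lemma Cost_after_move mu chi mu' chi' (s0 : @State Loc) p :
  goal G (fst s0) = None -> is_move p ->
  (forall r, mu s0 (p ++ r) = mu' (cur s0 p) r) ->
  (forall r, chi s0 (p ++ r) = chi' (cur s0 p) r) ->
  outcome G mu chi s0 (length p) = p ->
  Cost G mu chi s0 = ER_shift (pathprice G s0 p) (Cost G mu' chi' (cur s0 p)).
Proof.
  intros Hg E Hm Hc Ho.
  pose proof (outcome_shift mu chi mu' chi' s0 p _ Hm Hc Ho) as OS.
  (* before the move is complete the run stays in the non-goal location of [s0] *)
  assert (Early : forall m, (m < length p)%nat ->
            goal G (fst (cur s0 (outcome G mu chi s0 m))) = None).
  { intros m Hm'. rewrite (outcome_prefix mu chi s0 (length p) m); [| rewrite Ho; auto | lia].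
    rewrite Ho, delays_only_loc; auto. apply is_move_prefix; auto. }
  assert (FGiff : forall n, FirstGoal G mu chi s0 (length p + n) <->
                            FirstGoal G mu' chi' (cur s0 p) n).
  { intros n. unfold FirstGoal. rewrite OS, cur_app, length_app. split.
    - intros [H1 [H2 H3]]. split; [lia|split; auto]. intros m Hm'.
      specialize (H3 (length p + m)%nat). rewrite OS, cur_app in H3. apply H3; lia.
    - intros [H1 [H2 H3]]. split; [lia|split; auto]. intros m Hm'.
      destruct (Nat.lt_ge_cases m (length p)) as [Hl|Hl]; [apply Early; auto|].
      replace m with (length p + (m - length p))%nat by lia. rewrite OS, cur_app. apply H3; lia. }
  destruct (classic (exists n, FirstGoal G mu' chi' (cur s0 p) n)) as [[n Hn]|Hno].
  - rewrite (Cost_FirstGoal mu' chi' _ n Hn), (Cost_FirstGoal mu chi s0 (length p + n))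
      by (apply FGiff; auto).
    unfold cost_at. rewrite OS, cur_app, pathprice_app.
    destruct (goal G (fst (cur (cur s0 p) _))); simpl; auto. f_equal. ring.
  - rewrite !Cost_no_goal; auto.
    intros [N HN]. apply Hno.
    destruct (Nat.lt_ge_cases N (length p)) as [Hl|Hl].
    + destruct HN as [_ [HN _]]. exfalso; apply HN. apply Early; auto.
    + exists (N - length p)%nat. apply FGiff. replace (length p + (N - length p))%nat with N by lia.
      auto.
Qed.

Lemma least_witness (P : nat -> Prop) : (exists n, P n) -> exists n, P n /\ forall i, (i < n)%nat -> ~ P i.
Proof.
  intros [n Hn]. induction n as [n IH] using (well_founded_induction Wf_nat.lt_wf).
  destruct (classic (exists i, (i < n)%nat /\ P i)) as [[i [Hi Pi]]|H].
  - apply (IH i Hi Pi).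
  - exists n. split; auto. intros i Hi Pi. apply H; eauto.
Qed.

(* A valid strategy of the owner of a location with an outgoing edge
   completes a move after finitely many delays (non-Zeno condition), whatever
   the opponent does. *)
Lemma move_of_strategy (sg : Strategy) (s0 : @State Loc) :
  inI G s0 -> valid_strategy G (isMin G (fst s0)) sg -> (exists l', edge G (fst s0) l' = true) ->
  exists p, is_move p /\ valid_run G s0 p /\
    forall mu chi, (forall h, (if isMin G (fst s0) then mu else chi) s0 h = sg s0 h) ->
      outcome G mu chi s0 (length p) = p.
Proof.
  intros Hs V [l' Hl'].
  rewrite valid_strategy_from in V. specialize (V s0 Hs).
  destruct (V [] I eq_refl) as [_ Hnz].
  set (w := selfplay sg s0 []) in Hnz.
  destruct (least_witness _ Hnz) as [M [HM Hmin]].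
  assert (Delays : forall j, (j <= M)%nat -> delays_only (w j) /\ valid_run G s0 (w j) /\
     length (w j) = j /\
     forall mu chi, (forall h, (if isMin G (fst s0) then mu else chi) s0 h = sg s0 h) ->
       outcome G mu chi s0 j = w j).
  { induction j as [|j IH]; intros Hj; [simpl; repeat split; auto; constructor|].
    destruct (IH ltac:(lia)) as [Hd [Hv [Hlen Ho]]].
    assert (Hdel := Hmin j ltac:(lia)). apply NNPP in Hdel.
    destruct (V (w j) Hv) as [Hav _]; [rewrite delays_only_loc; auto|].
    destruct (sg s0 (w j)) as [[l''|t]|] eqn:Es; simpl in Hdel; try contradiction.
    assert (Hsp : w (S j) = w j ++ [Delay t]) by (unfold w; simpl; fold w; rewrite Es; auto).
    rewrite Hsp. split; [|split; [|split]].
    - apply Forall_app; split; [exact Hd|repeat constructor].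
    - apply valid_run_app; split; auto; simpl; auto.
    - rewrite length_app; simpl; lia.
    - intros mu chi Hsel. simpl. rewrite (Ho mu chi Hsel), delays_only_loc, Hsel, Es; auto. }
  destruct (Delays M (le_n _)) as [Hd [Hv [Hlen Ho]]].
  destruct (V (w M) Hv) as [Hav _]; [rewrite delays_only_loc; auto|].
  destruct (sg s0 (w M)) as [[l''|t]|] eqn:Es.
  - exists (w M ++ [Disc l'']). split; [apply is_move_iff; eauto|split].
    + apply valid_run_app; split; auto; simpl; auto.
    + intros mu chi Hsel. rewrite length_app, Hlen, Nat.add_1_r. simpl.
      rewrite (Ho mu chi Hsel), delays_only_loc, Hsel, Es; auto.
  - exfalso. apply HM. simpl. auto.
  - exfalso. apply (Hav (Disc l')). simpl. rewrite delays_only_loc; auto.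
Qed.

End Outcomes.

Lemma ER_le_trans a b c : ER_le a b -> ER_le b c -> ER_le a c.
Proof. destruct a, b, c; simpl; intros; auto; try lra; contradiction. Qed.

Lemma sup_ge (S : ER -> Prop) u a : ER_is_sup S u -> S a -> ER_le a u.
Proof. intros [H _] Ha; auto. Qed.

Lemma sup_least (S : ER -> Prop) u w :
  ER_is_sup S u -> (forall a, S a -> ER_le a (Fin w)) -> ER_le u (Fin w).
Proof. intros [_ H] Ha; auto. Qed.

Lemma inf_le (S : ER -> Prop) v a : ER_is_inf S (Fin v) -> S a -> ER_le (Fin v) a.
Proof. intros [H _] Ha; auto. Qed.

Lemma inf_greatest (S : ER -> Prop) v w :
  ER_is_inf S (Fin v) -> (forall a, S a -> ER_le (Fin w) a) -> w <= v.
Proof. intros [_ H] Ha. exact (H _ Ha). Qed.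

Lemma inf_approx (S : ER -> Prop) v eps :
  ER_is_inf S (Fin v) -> 0 < eps -> exists a, S a /\ ER_le a (Fin (v + eps)).
Proof.
  intros Hi He. apply NNPP. intros Hno.
  assert (v + eps <= v); [|lra].
  apply (inf_greatest S v (v + eps) Hi). intros [r|] Ha; simpl; auto.
  destruct (Rle_dec (v + eps) r); auto. exfalso; apply Hno. exists (Fin r); split; auto. simpl; lra.
Qed.

Lemma IsOptCost_min_strategy {Loc} (G : Game Loc) s v :
  IsOptCost G s v -> exists mu, valid_strategy G true mu.
Proof.
  intros [U [_ [_ Hinf]]]. apply NNPP; intros Hno.
  apply (Hinf PInf). intros a [mu [Vm _]]. exfalso; apply Hno; eauto.
Qed.

Section Opening.
Context {Loc : Type} (G : Game Loc).

Definition opening (t : R) (l' : Loc) : list Act :=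
  if Rlt_dec 0 t then [Delay t; Disc l'] else [Disc l'].

Definition opening_play (t : R) (l' : Loc) (h : list (@Act Loc)) : option Act :=
  match h with
  | [] => if Rlt_dec 0 t then Some (Delay t) else Some (Disc l')
  | _ => Some (Disc l')
  end.

Lemma opening_run (s0 : @State Loc) t l' :
  urgent G (fst s0) = false -> edge G (fst s0) l' = true -> 0 <= t -> snd s0 + t <= hi G ->
  is_move (opening t l') /\ valid_run G s0 (opening t l') /\
  cur s0 (opening t l') = (l', snd s0 + t) /\
  pathprice G s0 (opening t l') = INR (rate G (fst s0)) * t.
Proof.
  intros Hu He Ht Hh. destruct s0 as [l0 x0]. simpl in *. unfold opening.
  destruct (Rlt_dec 0 t) as [Hp|Hp].
  - simpl. repeat split; auto. ring.
  - assert (t = 0) by lra. subst. simpl. repeat split; auto; [rewrite Rplus_0_r; auto|ring].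
Qed.

Lemma opening_play_ok (s0 : @State Loc) t l' :
  urgent G (fst s0) = false -> edge G (fst s0) l' = true -> 0 <= t -> snd s0 + t <= hi G ->
  forall h, delays_only h -> valid_run G s0 h ->
     exists a, opening_play t l' h = Some a /\ avail G (cur s0 h) a /\
       (~ is_delay (Some a) \/
        exists b, opening_play t l' (h ++ [a]) = Some b /\ ~ is_delay (Some b)).
Proof.
  intros Hu He Ht Hh [|a h] Hd Hv.
  - simpl. destruct (Rlt_dec 0 t) as [Hp|Hp].
    + exists (Delay t). repeat split; auto. right. exists (Disc l'). simpl; auto.
    + exists (Disc l'). repeat split; auto.
  - exists (Disc l'). split; [reflexivity|split; [|left; simpl; auto]].
    unfold avail. rewrite (delays_only_loc s0 (a :: h) Hd). exact He.
Qed.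

Lemma opening_outcome (s0 : @State Loc) t l' T d mu chi :
  (forall h, (if isMin G (fst s0) then mu else chi) s0 h = glue (opening_play t l') T d s0 s0 h) ->
  outcome G mu chi s0 (length (opening t l')) = opening t l'.
Proof.
  intros Hsel. unfold opening. destruct (Rlt_dec 0 t) as [Hp|Hp]; simpl;
    rewrite Hsel, glue_before by constructor; unfold opening_play;
    destruct (Rlt_dec 0 t); try lra; simpl; auto.
  rewrite Hsel, glue_before by repeat constructor. auto.
Qed.

End Opening.

Definition cont_on (a b : R) (f : R -> R) : Prop :=
  forall x, a <= x <= b -> forall eps, 0 < eps -> exists delta, 0 < delta /\
      forall y, a <= y <= b -> Rabs (y - x) < delta -> Rabs (f y - f x) < eps.

(* Clamping to [a, b] extends a function continuous on [a, b] to all of R. *)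
Definition clamp (a b y : R) : R := Rmax a (Rmin b y).

Lemma clamp_in a b y : a <= b -> a <= clamp a b y <= b.
Proof. intros. unfold clamp, Rmax, Rmin. repeat destruct Rle_dec; lra. Qed.

Lemma clamp_id a b y : a <= y <= b -> clamp a b y = y.
Proof. intros. unfold clamp, Rmax, Rmin. repeat destruct Rle_dec; lra. Qed.

Lemma clamp_lipschitz a b y z : a <= b -> Rabs (clamp a b y - clamp a b z) <= Rabs (y - z).
Proof.
  intros. unfold clamp, Rmax, Rmin, Rabs. repeat destruct Rle_dec; repeat destruct Rcase_abs; lra.
Qed.

Lemma continuity_clamp a b x f : a <= b -> cont_on a b f ->
  forall t0, continuity_pt (fun t => f (clamp a b (x + t))) t0.
Proof.
  intros Hab Hf t0. unfold continuity_pt, continue_in, limit1_in, limit_in. simpl. unfold R_dist.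
  intros eps Heps. destruct (Hf (clamp a b (x + t0)) (clamp_in a b _ Hab) eps Heps) as [d [Hd Hd']].
  exists d. split; [lra|]. intros z [_ Hz]. apply Hd'; [apply clamp_in; auto|].
  eapply Rle_lt_trans; [apply clamp_lipschitz; auto|].
  replace (x + z - (x + t0)) with (z - t0) by ring. auto.
Qed.

Lemma MinOf_eq P m : IsMin P m -> MinOf P = m.
Proof.
  intros H. unfold MinOf. pose proof (epsilon_spec (inhabits 0) (IsMin P) (ex_intro _ m H)) as H2.
  destruct H as [H1 H1'], H2 as [H2 H2']. specialize (H1' _ H2). specialize (H2' _ H1). lra.
Qed.

Lemma MaxOf_eq P m : IsMax P m -> MaxOf P = m.
Proof.
  intros H. unfold MaxOf. pose proof (epsilon_spec (inhabits 0) (IsMax P) (ex_intro _ m H)) as H2.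
  destruct H as [H1 H1'], H2 as [H2 H2']. specialize (H1' _ H2). specialize (H2' _ H1). lra.
Qed.

Section FiniteFamily.
Context {A : Type} (L : list A) (P : A -> Prop).
Hypotheses (HL : forall w, P w -> In w L) (Hne : exists w, P w).

Lemma finite_argmin (m : A -> R) : exists w, P w /\ forall w', P w' -> m w <= m w'.
Proof.
  assert (Gen : forall L', (exists w, In w L' /\ P w) ->
            exists w, P w /\ forall w', In w' L' -> P w' -> m w <= m w').
  { induction L' as [|z L' IH]; intros [w [Hw Pw]]; [destruct Hw|].
    destruct (classic (exists w, In w L' /\ P w)) as [Hex|Hno].
    - destruct (IH Hex) as [a [Pa Ha]].
      destruct (classic (P z)) as [Pz|Pz]; [destruct (Rle_dec (m z) (m a))|].
      + exists z. split; auto. intros b [<-|Hb] Pb; [lra|]. specialize (Ha b Hb Pb); lra.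
      + exists a. split; auto. intros b [<-|Hb] Pb; [lra|auto].
      + exists a. split; auto. intros b [<-|Hb] Pb; [contradiction|auto].
    - destruct Hw as [<-|Hw]; [|exfalso; eauto].
      exists z. split; auto. intros b [<-|Hb] Pb; [lra|]. exfalso; eauto. }
  destruct Hne as [w Pw]. destruct (Gen L (ex_intro _ w (conj (HL w Pw) Pw))) as [a [Pa Ha]].
  exists a. split; auto.
Qed.

Variables (f : A -> R -> R) (c a b x : R).
Hypotheses (Hx : a <= x <= b) (Hcont : forall w, P w -> cont_on a b (f w)).

(* A best pair: an admissible delay [t] and a member [z] of the family that
   are optimal for [c * t + f z (x + t)] with respect to [le] ([Rle]: least
   value, [Rge]: greatest value). *)
Definition best_pair (le : R -> R -> Prop) (t : R) (z : A) : Prop :=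
  0 <= t /\ x + t <= b /\ P z /\ forall s w, 0 <= s -> x + s <= b -> P w ->
     le (c * t + f z (x + t)) (c * s + f w (x + s)).

(* Each [f w] attains its minimum over the compact delay interval, and
   finitely many such minima have a least one. *)
Lemma best_pair_min : exists t z, best_pair Rle t z.
Proof.
  set (E := fun z s => c * s + f z (x + s)).
  set (tm := fun z => epsilon (inhabits 0)
               (fun t => 0 <= t <= b - x /\ forall s, 0 <= s <= b - x -> E z t <= E z s)).
  assert (Htm : forall z, P z -> 0 <= tm z <= b - x /\ forall s, 0 <= s <= b - x -> E z (tm z) <= E z s).
  { intros z Pz. apply epsilon_spec.
    destruct (continuity_ab_min (fun t => c * t + f z (clamp a b (x + t))) 0 (b - x))
      as [m [Hm Hm']]; [lra| |].
    - intros t _. apply (continuity_pt_plus (mult_real_fct c id)).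
      + apply continuity_pt_scal, derivable_continuous_pt, derivable_pt_id.
      + apply continuity_clamp; auto. lra.
    - exists m. split; auto. intros s Hs. specialize (Hm s Hs). unfold E.
      rewrite !clamp_id in Hm by lra. auto. }
  destruct (finite_argmin (fun z => E z (tm z))) as [z [Pz Hmin]].
  exists (tm z), z. destruct (Htm z Pz) as [H1 H2].
  repeat split; auto; try lra. intros s w Hs Hs' Pw. change (E z (tm z) <= E w s).
  eapply Rle_trans; [apply (Hmin w Pw)|]. apply (Htm w Pw). lra.
Qed.

Lemma MinOf_family y : exists w, P w /\
  MinOf (fun v => exists w', P w' /\ v = f w' y) = f w y /\ forall w', P w' -> f w y <= f w' y.
Proof.
  destruct (finite_argmin (fun w => f w y)) as [w [Pw Hw]].
  exists w. repeat split; auto. apply MinOf_eq. split; eauto. intros v [w' [Pw' ->]]. auto.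
Qed.

Lemma MaxOf_family y : exists w, P w /\
  MaxOf (fun v => exists w', P w' /\ v = f w' y) = f w y /\ forall w', P w' -> f w' y <= f w y.
Proof.
  destruct (finite_argmin (fun w => - f w y)) as [w [Pw Hw]].
  exists w. repeat split; auto.
  - apply MaxOf_eq. split; eauto. intros v [w' [Pw' ->]]. specialize (Hw w' Pw'). lra.
  - intros w' Pw'. specialize (Hw w' Pw'). lra.
Qed.

Lemma minC_best_pair t z : best_pair Rle t z ->
  minC b (fun y => MinOf (fun v => exists w, P w /\ v = f w y)) c x = c * t + f z (x + t).
Proof.
  intros [Ht [Hth [Pz Hbest]]]. apply MinOf_eq. split.
  - exists t. split; [lra|]. destruct (MinOf_family (x + t)) as [w [Pw [-> Hw]]].
    specialize (Hbest t w Ht Hth Pw). specialize (Hw z Pz). lra.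
  - intros y [s [Hs ->]]. destruct (MinOf_family (x + s)) as [w [Pw [-> _]]].
    apply Hbest; auto; lra.
Qed.

Lemma maxC_best_pair t z : best_pair Rge t z ->
  maxC b (fun y => MaxOf (fun v => exists w, P w /\ v = f w y)) c x = c * t + f z (x + t).
Proof.
  intros [Ht [Hth [Pz Hbest]]]. apply MaxOf_eq. split.
  - exists t. split; [lra|]. destruct (MaxOf_family (x + t)) as [w [Pw [-> Hw]]].
    specialize (Hbest t w Ht Hth Pw). specialize (Hw z Pz). lra.
  - intros y [s [Hs ->]]. destruct (MaxOf_family (x + s)) as [w [Pw [-> _]]].
    apply Rge_le, Hbest; auto; lra.
Qed.

End FiniteFamily.

(* Maximizing [c * t + f z (x + t)] is minimizing its negative. *)
Lemma best_pair_max {A : Type} (L : list A) (P : A -> Prop) (f : A -> R -> R) (c a b x : R) :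
  (forall w, P w -> In w L) -> (exists w, P w) -> a <= x <= b ->
  (forall w, P w -> cont_on a b (f w)) -> exists t z, best_pair P f c b x Rge t z.
Proof.
  intros HL Hne Hx Hcont.
  destruct (best_pair_min L P HL Hne (fun w y => - f w y) (- c) a b x Hx)
    as [t [z [Ht [Hth [Pz Hbest]]]]].
  - intros w Pw y Hy eps He. destruct (Hcont w Pw y Hy eps He) as [d [Hd Hd']].
    exists d; split; auto. intros y' Hy' Hyy.
    replace (- f w y' - - f w y) with (- (f w y' - f w y)) by ring. rewrite Rabs_Ropp. auto.
  - exists t, z. repeat split; auto. intros s w Hs Hs' Pw. specialize (Hbest s w Hs Hs' Pw). lra.
Qed.

Section OneStep.
Context {Loc : Type} (G : Game Loc) (OptCost : Loc -> R -> R).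
Hypothesis HOpt : forall l' x, lo G <= x <= hi G -> IsOptCost G (l', x) (OptCost l' x).

Definition eps_optimal (eps : R) (s : @State Loc) (m : Strategy) : Prop :=
  valid_strategy G true m /\ forall chi, valid_strategy G false chi ->
    ER_le (Cost G m chi s) (Fin (OptCost (fst s) (snd s) + eps)).

Lemma eps_optimal_exists eps s : 0 < eps -> inI G s -> exists m, eps_optimal eps s m.
Proof.
  intros He Hs. destruct s as [l0 x0]. destruct (HOpt l0 x0 Hs) as [U [HU Hinf]].
  destruct (inf_approx _ _ eps Hinf He) as [a [[mu' [Vm' ->]] Ha]].
  exists mu'. split; auto. intros chi Vc. simpl.
  apply (ER_le_trans _ (U mu')); auto. apply (sup_ge _ _ _ (HU mu' Vm')). eauto.
Qed.

Variables (l : Loc) (x : R).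
Hypotheses (Hx : lo G <= x <= hi G) (Hnogoal : goal G l = None).
Variable U : @Strategy Loc -> ER.
Hypothesis HU : forall mu, valid_strategy G true mu ->
  ER_is_sup (fun c => exists chi, valid_strategy G false chi /\ c = Cost G mu chi (l, x)) (U mu).
Hypothesis Hinf :
  ER_is_inf (fun c => exists mu, valid_strategy G true mu /\ c = U mu) (Fin (OptCost l x)).

Let Hstart : inI G (l, x).
Proof. unfold inI; simpl; lra. Qed.

Lemma value_of_strategy_after_move mu p l' t F :
  valid_strategy G true mu -> is_move p -> valid_run G (l, x) p ->
  cur (l, x) p = (l', x + t) -> pathprice G (l, x) p = INR (rate G l) * t ->
  (forall chi1, valid_strategy G false chi1 ->
     valid_strategy G false (glue F (fun _ => chi1) chi1 (l, x)) /\
     outcome G mu (glue F (fun _ => chi1) chi1 (l, x)) (l, x) (length p) = p) ->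
  ER_le (Fin (INR (rate G l) * t + OptCost l' (x + t))) (U mu).
Proof.
  intros Vm Ep Vp Hc Hpp Hchi.
  assert (Hs1 : inI G (l', x + t)) by (rewrite <- Hc; apply valid_run_inI; auto).
  destruct (U mu) as [u|] eqn:Eu; simpl; auto.
  destruct (HOpt l' (x + t) Hs1) as [U1 [HU1 Hinf1]].
  set (mu1 := continuation mu (l, x) p).
  assert (Vm1 : valid_strategy G true mu1) by (apply continuation_valid; auto).
  assert (Hopt1 := inf_le _ _ (U1 mu1) Hinf1 (ex_intro _ mu1 (conj Vm1 eq_refl))).
  assert (Hub : ER_le (U1 mu1) (Fin (u - INR (rate G l) * t))).
  { apply (sup_least _ _ _ (HU1 mu1 Vm1)). intros a [chi1 [Vc1 ->]].
    destruct (Hchi chi1 Vc1) as [Vc Ho].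
    assert (HC := sup_ge _ _ _ (HU mu Vm) (ex_intro _ _ (conj Vc eq_refl))).
    rewrite Eu, (Cost_after_move G mu _ mu1 chi1 (l, x) p) in HC; auto.
    - rewrite Hc, Hpp in HC. destruct (Cost G mu1 chi1 (l', x + t)); simpl in *; lra.
    - intros r. unfold mu1. rewrite continuation_eq. auto.
    - intros r. rewrite glue_after; auto. }
  destruct (U1 mu1); simpl in *; lra.
Qed.

Lemma cost_after_move_le mu chi p l' t m eps :
  valid_strategy G false chi -> is_move p -> valid_run G (l, x) p ->
  cur (l, x) p = (l', x + t) -> pathprice G (l, x) p = INR (rate G l) * t ->
  outcome G mu chi (l, x) (length p) = p ->
  (forall r, mu (l, x) (p ++ r) = m (l', x + t) r) -> eps_optimal eps (l', x + t) m ->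
  ER_le (Cost G mu chi (l, x)) (Fin (INR (rate G l) * t + OptCost l' (x + t) + eps)).
Proof.
  intros Vc Ep Vp Hc Hpp Ho Hm [_ Hgood].
  set (chi1 := continuation chi (l, x) p).
  assert (Vc1 : valid_strategy G false chi1) by (apply continuation_valid; auto).
  rewrite (Cost_after_move G mu chi m chi1 (l, x) p); auto.
  - specialize (Hgood chi1 Vc1). rewrite Hc, Hpp. simpl in Hgood.
    destruct (Cost G m chi1 (l', x + t)); simpl in *; lra.
  - intros r. rewrite Hm, Hc. auto.
  - intros r. unfold chi1. rewrite continuation_eq. auto.
Qed.

Section MinLocation.
Hypotheses (Hout : exists l', edge G l l' = true) (Hurg : urgent G l = false)
  (Hmin : isMin G l = true).

(* Whatever the minimizer does, she eventually takes some move. *)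
Lemma min_location_ge : forall mu, valid_strategy G true mu ->
  exists t l', 0 <= t /\ x + t <= hi G /\ edge G l l' = true /\
    ER_le (Fin (INR (rate G l) * t + OptCost l' (x + t))) (U mu).
Proof.
  intros mu Vm.
  destruct (move_of_strategy G mu (l, x) Hstart) as [p [Ep [Vp Op]]];
    [simpl; rewrite Hmin; auto | simpl; auto|].
  destruct (is_move_run G (l, x) p Ep Vp) as [l' [t [Ht [He [Hc Hpp]]]]].
  cbn [fst snd] in He, Hc, Hpp.
  assert (Hs1 : inI G (l', x + t)) by (rewrite <- Hc; apply valid_run_inI; auto).
  exists t, l'. repeat split; auto; [unfold inI in Hs1; simpl in Hs1; lra|].
  apply (value_of_strategy_after_move mu p l' t (fun _ => None)); auto.
  intros chi1 Vc1. split.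
  - apply glue_valid; [exact Vc1| |simpl; rewrite Hmin; discriminate].
    intros q _ Vq. apply (valid_strategy_from G false chi1); auto. apply valid_run_inI; auto.
  - apply Op. intros h. simpl. rewrite Hmin. auto.
Qed.

(* The minimizer may open with any move and then play near-optimally. *)
Lemma min_location_le t l' eps : 0 <= t -> x + t <= hi G -> edge G l l' = true -> 0 < eps ->
  OptCost l x <= INR (rate G l) * t + OptCost l' (x + t) + eps.
Proof.
  intros Ht Hh He Heps.
  destruct (opening_run G (l, x) t l' Hurg He Ht Hh) as [Ep [Vp [Hc Hpp]]].
  cbn [fst snd] in Hc, Hpp.
  assert (Hs1 : inI G (l', x + t)) by (rewrite <- Hc; apply valid_run_inI; auto).
  destruct (eps_optimal_exists eps _ Heps Hs1) as [m Hm].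
  set (mu := glue (opening_play t l') (fun _ => m) m (l, x)).
  assert (Vm : valid_strategy G true mu).
  { destruct Hm as [Vm' _].
    apply glue_valid; [exact Vm'| |intros _; apply opening_play_ok; auto].
    intros q _ Vq. apply (valid_strategy_from G true m); auto. apply valid_run_inI; auto. }
  assert (Hv := inf_le _ _ (U mu) Hinf (ex_intro _ mu (conj Vm eq_refl))).
  assert (Hub : ER_le (U mu) (Fin (INR (rate G l) * t + OptCost l' (x + t) + eps))).
  { apply (sup_least _ _ _ (HU mu Vm)). intros a [chi [Vc ->]].
    apply (cost_after_move_le mu chi (opening t l') l' t m eps); auto.
    - apply (opening_outcome G (l, x) t l' (fun _ => m) m). intros h. simpl. rewrite Hmin. auto.
    - intros r. unfold mu. rewrite glue_after, Hc; auto. }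
  destruct (U mu); simpl in *; lra.
Qed.

Lemma min_location_value t z :
  best_pair (fun w => edge G l w = true) OptCost (INR (rate G l)) (hi G) x Rle t z ->
  OptCost l x = INR (rate G l) * t + OptCost z (x + t).
Proof.
  intros [Ht [Hth [Hz Hbest]]]. apply Rle_antisym.
  - apply Rle_plus_epsilon. intros eps Heps. apply min_location_le; auto.
  - apply (inf_greatest _ _ _ Hinf). intros a [mu [Vm ->]].
    destruct (min_location_ge mu Vm) as [s [w [Hs [Hs' [Hw Hle]]]]].
    eapply ER_le_trans; [|exact Hle]. simpl. apply Hbest; auto.
Qed.

End MinLocation.

Section MaxLocation.
Hypotheses (Hout : exists l', edge G l l' = true) (Hurg : urgent G l = false)
  (Hmax : isMin G l = false).

(* The maximizer may open with any move. *)
Lemma max_location_ge t l' : 0 <= t -> x + t <= hi G -> edge G l l' = true ->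
  INR (rate G l) * t + OptCost l' (x + t) <= OptCost l x.
Proof.
  intros Ht Hh He. apply (inf_greatest _ _ _ Hinf). intros a [mu [Vm ->]].
  destruct (opening_run G (l, x) t l' Hurg He Ht Hh) as [Ep [Vp [Hc Hpp]]].
  cbn [fst snd] in Hc, Hpp.
  apply (value_of_strategy_after_move mu (opening t l') l' t (opening_play t l')); auto.
  intros chi1 Vc1. split.
  - apply glue_valid; [exact Vc1| |intros _; apply opening_play_ok; auto].
    intros q _ Vq. apply (valid_strategy_from G false chi1); auto. apply valid_run_inI; auto.
  - apply (opening_outcome G (l, x) t l' (fun _ => chi1) chi1). intros h. simpl. rewrite Hmax. auto.
Qed.

(* Whatever move the maximizer takes, the minimizer continues near-optimally. *)
Lemma max_location_le eps M : 0 < eps ->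
  (forall t l', 0 <= t -> x + t <= hi G -> edge G l l' = true ->
     INR (rate G l) * t + OptCost l' (x + t) <= M) ->
  OptCost l x <= M + eps.
Proof.
  intros Heps HM.
  destruct (IsOptCost_min_strategy G _ _ (HOpt l x Hx)) as [d Vd].
  set (K := fun s => epsilon (inhabits d) (eps_optimal eps s)).
  assert (HK : forall s, inI G s -> eps_optimal eps s (K s)).
  { intros s Hs'. apply epsilon_spec. apply eps_optimal_exists; auto. }
  set (mu := glue (fun _ => None) (fun q => K (cur (l, x) q)) d (l, x)).
  assert (Vm : valid_strategy G true mu).
  { apply glue_valid; auto; [|simpl; rewrite Hmax; discriminate].
    intros q _ Vq. destruct (HK _ (valid_run_inI G _ _ Hstart Vq)) as [Vk _].
    apply (valid_strategy_from G true _); auto. apply valid_run_inI; auto. }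
  assert (Hv := inf_le _ _ (U mu) Hinf (ex_intro _ mu (conj Vm eq_refl))).
  assert (Hub : ER_le (U mu) (Fin (M + eps))).
  { apply (sup_least _ _ _ (HU mu Vm)). intros a [chi [Vc ->]].
    destruct (move_of_strategy G chi (l, x) Hstart) as [p [Ep [Vp Op]]];
      [simpl; rewrite Hmax; auto | simpl; auto|].
    destruct (is_move_run G (l, x) p Ep Vp) as [l' [t [Ht [He [Hc Hpp]]]]].
    cbn [fst snd] in He, Hc, Hpp.
    assert (Hs1 : inI G (l', x + t)) by (rewrite <- Hc; apply valid_run_inI; auto).
    assert (HMt := HM t l' Ht ltac:(unfold inI in Hs1; simpl in Hs1; lra) He).
    eapply ER_le_trans.
    - apply (cost_after_move_le mu chi p l' t (K (l', x + t)) eps); auto.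
      + apply Op. intros h. simpl. rewrite Hmax. auto.
      + intros r. unfold mu. rewrite glue_after, Hc; auto.
    - simpl. lra. }
  destruct (U mu); simpl in *; lra.
Qed.

Lemma max_location_value t z :
  best_pair (fun w => edge G l w = true) OptCost (INR (rate G l)) (hi G) x Rge t z ->
  OptCost l x = INR (rate G l) * t + OptCost z (x + t).
Proof.
  intros [Ht [Hth [Hz Hbest]]]. apply Rle_antisym.
  - apply Rle_plus_epsilon. intros eps Heps. apply max_location_le; auto.
    intros s w Hs Hs' Hw. apply Rge_le, Hbest; auto.
  - apply max_location_ge; auto.
Qed.

End MaxLocation.
End OneStep.

Theorem lemma4 (Loc : Type) (G : Game Loc) (OptCost : Loc -> R -> R)
  (HOpt : forall l' x, lo G <= x <= hi G -> IsOptCost G (l', x) (OptCost l' x))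
  (l : Loc)
  (Hnogoal : goal G l = None)
  (Hurg : urgent G l = false)
  (Hout : exists l', edge G l l' = true)
  (Hsucc : forall l', edge G l l' = true -> cost_function (lo G) (hi G) (OptCost l')) :
  (isMin G l = true ->
     forall x, lo G <= x <= hi G ->
       OptCost l x =
       minC (hi G) (fun y => MinOf (fun v => exists l', edge G l l' = true /\ v = OptCost l' y))
            (INR (rate G l)) x) /\
  (isMin G l = false ->
     forall x, lo G <= x <= hi G ->
       OptCost l x =
       maxC (hi G) (fun y => MaxOf (fun v => exists l', edge G l l' = true /\ v = OptCost l' y))
            (INR (rate G l)) x).
Proof.
  assert (HL : forall w, edge G l w = true -> In w (locs G)) by (intros; apply locs_complete).
  assert (Hcont : forall w, edge G l w = true -> cont_on (lo G) (hi G) (OptCost w))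
    by (intros w Hw; exact (proj1 (proj2 (Hsucc w Hw)))).
  split; intros Hown x Hx; destruct (HOpt l x Hx) as [U [HU Hinf]].
  - destruct (best_pair_min (locs G) _ HL Hout OptCost (INR (rate G l)) _ _ x Hx Hcont)
      as [t [z Hb]].
    rewrite (minC_best_pair (locs G) _ HL Hout OptCost _ _ _ t z Hb).
    eapply min_location_value; eauto.
  - destruct (best_pair_max (locs G) _ OptCost (INR (rate G l)) _ _ x HL Hout Hx Hcont)
      as [t [z Hb]].
    rewrite (maxC_best_pair (locs G) _ HL Hout OptCost _ _ _ t z Hb).
    eapply max_location_value; eauto.
Qed.
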